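(* Let $A,B,C$ be agents and $\alpha,\beta,\gamma,\delta\ge0$, $\zeta\in(0,1]$. Use the following notation for interactive processes: $B_C^{\mathrm{dist}}$ is $B$ prompted to act as $C$ and then given the distinguisher prompt with respect to $C$; $C^{\mathrm{dist}}$ is $C$ given the distinguisher prompt; $A_{C}$ is $A$ given the actor prompt to imitate $C$; $B_C$ is $B$ given the actor prompt to imitate $C$; $A_{B,C}$ is $A$ given the actor prompt to imitate $B$ and then receiving (as its first incoming message) the actor prompt to imitate $C$. For a distinguisher process $\Pi$ and interlocutor $Y$ write $\Pr[\Pi\to b\mid Y]$ for the probability that $\Pi$, interacting with $Y$, finally outputs the bit $b$. Assume: (1) $A\geq_\alpha B$ and $B\geq_\beta C$ (GTT comparator). (2) ($\zeta$-Turing-recursivity of $B$ w.r.t. $C$.) In $\mathrm{GTT}(A,B)$ there is an event $R$, independent of the identity of the unknown agent, with $\Pr[R]\ge\zeta$, such that conditioned on $R$ the distinguisher $B$ sends the actor prompt for imitating $C$ and thereafter behaves exactly as $B_C^{\mathrm{dist}}$; thus conditioned on $R$, its output has the law of $B_C^{\mathrm{dist}}$ interacting with $A_{B,C}$ if the unknown agent is $A$, and with $B_C$ if the unknown agent is $B$. (3) (Better than random.) Conditioned on the complement of $R$, $B$ succeeds in $\mathrm{GTT}(A,B)$ with probability at least $1/2$. (4) ($B\geq^{\mathrm{dist,stat}}_\gamma C$, in interactive form.) For every interlocutor $Y$ and $b\in\{0,1\}$, $\bigl|\Pr[B_C^{\mathrm{dist}}\to b\mid Y]-\Pr[C^{\mathrm{dist}}\to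 b\mid Y]\bigr|\le\gamma$. (5) ($A$ is a reasonably intelligent imitator of $C$.) $\Pr[C^{\mathrm{dist}}\to 0\mid A_C]\le \Pr[C^{\mathrm{dist}}\to 0\mid A_{B,C}]+\delta$. Then $A\geq_\epsilon C$ with $\epsilon=\alpha/\zeta+\beta+\gamma+\delta$.
   Context: GTT $\mathrm{GTT}(X,Y)$: a fresh $Y$ is the distinguisher (given the distinguisher prompt asking whether its interlocutor is a $Y$) and interacts with an unknown agent which with probability $1/2$ is a fresh $Y$ and with probability $1/2$ is a fresh $X$ given the actor prompt to imitate $Y$; the distinguisher outputs $1$ (''same as me'') or $0$ and succeeds if correct. $p(X,Y)=\Pr[Y\text{ succeeds}]$, and the comparator $X\ge_\epsilon Y$ means $p(X,Y)\le\frac12+\epsilon$. In particular $p(A,C)=\frac12\Pr[C^{\mathrm{dist}}\to0\mid A_C]+\frac12\Pr[C^{\mathrm{dist}}\to1\mid C]$, where $C$ as interlocutor means a fresh instance of $C$ (equivalently $C$ imitating itself), and $p(B,C)=\frac12\Pr[C^{\mathrm{dist}}\to0\mid B_C]+\frac12\Pr[C^{\mathrm{dist}}\to1\mid C]$. *)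

From Stdlib Require Import Reals Lra.
Open Scope R_scope.

(* An abstract model of agents and interactive processes.
   Outputs of distinguishers are bits: true = 1 ("same as me"), false = 0. *)
Record InteractionModel := {
  Agent : Type;
  Proc : Type;
  (* fresh instance of an agent (= the agent imitating itself) *)
  fresh : Agent -> Proc;
  (* distP Y = Y^dist : Y given the distinguisher prompt w.r.t. Y *)
  distP : Agent -> Proc;
  (* actor X Y = X_Y : X given the actor prompt to imitate Y *)
  actor : Agent -> Agent -> Proc;
  (* actor2 X Y Z = X_{Y,Z} : X prompted to imitate Y, then receiving as
     first incoming message the actor prompt to imitate Z *)
  actor2 : Agent -> Agent -> Agent -> Proc;
  (* actdist B C = B_C^dist : B prompted to act as C, then given the
     distinguisher prompt with respect to C *)
  actdist : Agent -> Agent -> Proc;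
  (* Pr Pi Y b = Pr[Pi -> b | Y] *)
  Pr : Proc -> Proc -> bool -> R;
  Pr_nonneg : forall Pi Y b, 0 <= Pr Pi Y b;
  Pr_sum : forall Pi Y, Pr Pi Y false + Pr Pi Y true = 1
}.

Arguments fresh {i}.
Arguments distP {i}.
Arguments actor {i}.
Arguments actor2 {i}.
Arguments actdist {i}.
Arguments Pr {i}.

(* p(X,Y) = success probability of the distinguisher Y in GTT(X,Y). *)
Definition gtt_p (M : InteractionModel) (X Y : Agent M) : R :=
  / 2 * Pr (distP Y) (actor X Y) false + / 2 * Pr (distP Y) (fresh Y) true.

Definition gtt_ge (M : InteractionModel) (eps : R) (X Y : Agent M) : Prop :=
  gtt_p M X Y <= / 2 + eps.

(* Write s(Pi; Y0, Y1) for the success probability of a distinguisher Pi that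
   should answer 0 against Y0 and 1 against Y1, so p(X, Y) = s(Y^dist; X_Y, Y).
   These success probabilities are additive along a hybrid chain:
   s(Pi; Y0, Y2) = s(Pi; Y0, Y1) + s(Pi; Y1, Y2) - 1/2.  Chaining
   A_C ~ A_{B,C} ~ B_C ~ C under C^dist, the first link costs delta/2 by (5),
   the last one is p(B, C) <= 1/2 + beta, and the middle one is within gamma of
   the advantage of B_C^dist, which by (2)+(3) is diluted in p(A, B) only by the
   factor Pr[R] >= zeta, hence at most alpha/zeta. *)
From Stdlib Require Import Reals Lra.
Open Scope R_scope.

Definition success (M : InteractionModel) (Pi Y0 Y1 : Proc M) : R :=
  / 2 * Pr Pi Y0 false + / 2 * Pr Pi Y1 true.

Lemma gtt_p_success (M : InteractionModel) (X Y : Agent M) :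
  gtt_p M X Y = success M (distP Y) (actor X Y) (fresh Y).
Proof. reflexivity. Qed.

Lemma success_hybrid (M : InteractionModel) (Pi Y0 Y1 Y2 : Proc M) :
  success M Pi Y0 Y2 = success M Pi Y0 Y1 + success M Pi Y1 Y2 - / 2.
Proof. unfold success; pose proof (Pr_sum M Pi Y1); lra. Qed.

Lemma success_le_first (M : InteractionModel) (Pi Y0 Y0' Y1 : Proc M) (delta : R) :
  Pr Pi Y0 false <= Pr Pi Y0' false + delta ->
  success M Pi Y0 Y1 <= success M Pi Y0' Y1 + delta / 2.
Proof. unfold success; lra. Qed.

Lemma success_close (M : InteractionModel) (Pi Pi' Y0 Y1 : Proc M) (gamma : R) :
  (forall (Y : Proc M) (b : bool), Rabs (Pr Pi Y b - Pr Pi' Y b) <= gamma) ->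
  success M Pi' Y0 Y1 <= success M Pi Y0 Y1 + gamma.
Proof.
  intros hclose; unfold success.
  pose proof (hclose Y0 false) as h0; pose proof (hclose Y1 true) as h1.
  rewrite Rabs_minus_sym in h0, h1.
  pose proof (Rle_abs (Pr Pi' Y0 false - Pr Pi Y0 false)).
  pose proof (Rle_abs (Pr Pi' Y1 true - Pr Pi Y1 true)).
  lra.
Qed.

Lemma le_div_of_weighted_le (r zeta x alpha : R) :
  0 < zeta <= r -> 0 <= alpha -> r * x <= alpha -> x <= alpha / zeta.
Proof.
  intros [hzeta hr] halpha hrx.
  apply Rmult_le_reg_l with zeta; [lra |].
  replace (zeta * (alpha / zeta)) with alpha by (field; lra).
  destruct (Rle_dec x 0) as [hx | hx].
  - pose proof (Rmult_le_compat_l zeta x 0); nra.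
  - pose proof (Rmult_le_compat_r x zeta r); nra.
Qed.

Lemma mixture_advantage_le (p x r q alpha : R) :
  r <= 1 -> / 2 <= q -> p = r * x + (1 - r) * q -> p <= / 2 + alpha ->
  r * (x - / 2) <= alpha.
Proof. intros hr hq hp hpa; nra. Qed.

Theorem mainTheorem4 (M : InteractionModel) (A B C : Agent M)
  (alpha beta gamma delta zeta : R)
  (halpha : 0 <= alpha) (hbeta : 0 <= beta) (hgamma : 0 <= gamma)
  (hdelta : 0 <= delta) (hzeta : 0 < zeta <= 1)
  (h1AB : gtt_ge M alpha A B) (h1BC : gtt_ge M beta B C)
  (h23 : exists r q : R, zeta <= r <= 1 /\ / 2 <= q <= 1 /\
     gtt_p M A B =
       r * (/ 2 * Pr (actdist B C) (actor2 A B C) false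
            + / 2 * Pr (actdist B C) (actor B C) true)
       + (1 - r) * q)
  (h4 : forall (Y : Proc M) (b : bool),
     Rabs (Pr (actdist B C) Y b - Pr (distP C) Y b) <= gamma)
  (h5 : Pr (distP C) (actor A C) false
        <= Pr (distP C) (actor2 A B C) false + delta) :
  gtt_ge M (alpha / zeta + beta + gamma + delta) A C.
Proof.
  destruct h23 as [r [q [[hzr hr1] [[hq _] hp]]]].
  fold (success M (actdist B C) (actor2 A B C) (actor B C)) in hp.
  assert (hBdist : success M (actdist B C) (actor2 A B C) (actor B C) - / 2
                   <= alpha / zeta).
  { apply le_div_of_weighted_le with r; [lra | exact halpha |].
    exact (mixture_advantage_le _ _ _ _ _ hr1 hq hp h1AB). }
  assert (hCdist := success_close M (actdist B C) (distP C)
                      (actor2 A B C) (actor B C) gamma h4).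
  assert (hfirst := success_le_first M (distP C) (actor A C) (actor2 A B C)
                      (fresh C) delta h5).
  unfold gtt_ge in *; rewrite gtt_p_success in *.
  rewrite (success_hybrid M (distP C) (actor2 A B C) (actor B C)) in hfirst.
  lra.
Qed.
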